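(* Let $G_1=(V,E_1)$, $G_2=(V,E_2)$, $G_3=(V,E_3)$ be simple graphs on a common vertex set $V$ with $|V|=m$ and $E_1\cap E_2=E_1\cap E_3=\emptyset$. Let $\delta_1$ be the minimum degree of $G_1$, and $\Delta_2,\Delta_3$ the maximum degrees of $G_2,G_3$. Let $\ell\geq 2$ be an integer. Suppose $$m\cdot\frac{3\ell-1}{3\ell}\leq \delta_1 \qquad\text{and}\qquad \Delta_2\Delta_3\leq \frac{m-3}{15\ell^2}.$$ Then there are $\lfloor m/\ell\rfloor$ pairwise vertex-disjoint copies of $K_\ell$ in $G_1$ such that no two of them form an alternating-$(\ell,2,\ell,2)$-bag with $G_2$ and $G_3$.
   Context: Two vertex-disjoint copies $A_1,A_2$ of $K_\ell$ in $G_1$ form an alternating-$(\ell,2,\ell,2)$-bag with $G_2$ and $G_3$ if there exist two vertex-disjoint edges $e_2\in E_2$ and $e_3\in E_3$ each of which joins a vertex of $A_1$ to a vertex of $A_2$. *)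

From mathcomp Require Import all_boot all_order all_algebra.
Set Implicit Arguments. Unset Strict Implicit. Unset Printing Implicit Defensive.

Definition simple_graph (V : finType) (e : rel V) : Prop :=
  (forall x y, e x y = e y x) /\ (forall x, ~~ e x x).

Definition edge_disjoint (V : finType) (e f : rel V) : Prop :=
  forall x y, e x y -> ~~ f x y.

Definition deg (V : finType) (e : rel V) (v : V) : nat := #|[set u | e v u]|.

(* minimum degree (#|V| is used as neutral element; it exceeds every degree) *)
Definition mindeg (V : finType) (e : rel V) : nat :=
  \big[minn/#|V|]_(v : V) deg e v.

Definition maxdeg (V : finType) (e : rel V) : nat :=
  \max_(v : V) deg e v.

Definition is_Kl_copy (V : finType) (e : rel V) (l : nat) (A : {set V}) : Prop :=
  #|A| = l /\ (forall x y, x \in A -> y \in A -> x != y -> e x y).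

Definition alt_bag (V : finType) (e2 e3 : rel V) (A1 A2 : {set V}) : Prop :=
  exists x2 y2 x3 y3,
    [/\ e2 x2 y2 /\ (x2 \in A1) /\ (y2 \in A2),
        e3 x3 y3 /\ (x3 \in A1) /\ (y3 \in A2) &
        [disjoint [set x2; y2] & [set x3; y3]]].

From mathcomp Require Import all_boot all_order all_algebra zify.
Import Order.TTheory GRing.Theory Num.Theory.

Set Implicit Arguments.
Unset Strict Implicit.
Unset Printing Implicit Defensive.

(* The copies are grown greedily: keep [k = m %/ l] pairwise disjoint cliques of
   size at most [l], no two of which form an alternating bag, and enlarge their
   total size by one until all of them are full.  Take an uncovered vertex [v];
   a part is bad if one of its vertices is a non-neighbour of [v] in [G1], or is
   joined to [v] through a third part by a [G2]-edge and a [G3]-edge.  There are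
   at most [t + 2 l D2 D3] bad parts, [t = m - 1 - delta1].  If a good part is not
   full, [v] joins it.  Otherwise take a part [C] that is not full and, by
   counting, a vertex [w] of a good part [D] that conflicts with no vertex of [C]
   and is not adjacent to [v] in [G2] or [G3]; move [w] to [C] and let [v] take
   its place in [D].  If [D2 D3 = 0] there are no bags at all. *)

Lemma leq_card_bigcup (I T : finType) (P : pred I) (F : I -> {set T}) :
  #|\bigcup_(i | P i) F i| <= \sum_(i | P i) #|F i|.
Proof.
elim/big_ind2: _ => // [|A m B n Am Bn]; first by rewrite cards0.
exact: leq_trans (leq_card_setU _ _) (leq_add Am Bn).
Qed.

Lemma card_bigcup_disjoint (I T : finType) (P : pred I) (F : I -> {set T}) :
  (forall i j, i != j -> [disjoint F i & F j]) ->
  #|\bigcup_(i | P i) F i| = \sum_(i | P i) #|F i|.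
Proof.
move=> disjF; pose G i := if P i then F i else set0.
have disjG i j : i != j -> [disjoint G i & G j].
  move=> ij; apply: disjointW (disjF _ _ ij); rewrite /G.
    by case: (P i); rewrite ?sub0set.
  by case: (P j); rewrite ?sub0set.
have -> : \bigcup_(i | P i) F i = \bigcup_i G i by rewrite big_mkcond.
rewrite -sum1_card (partition_disjoint_bigcup addn (fun=> 1) disjG) [RHS]big_mkcond.
by apply: eq_bigr => i _; rewrite /G; case: (P i); rewrite sum1_card ?cards0.
Qed.

Lemma disjoint_setU1 (T : finType) (x : T) (A B : {set T}) :
  [disjoint x |: A & B] = (x \notin B) && [disjoint A & B].
Proof. by rewrite !disjoints_subset subUset sub1set inE. Qed.

Lemma pairwise_dfwith (I : eqType) (T : Type) (P : T -> T -> Prop)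
    (f : I -> T) i (x : T) :
  (forall a b, P a b -> P b a) ->
  (forall a b, a != b -> P (f a) (f b)) -> (forall j, i != j -> P x (f j)) ->
  forall a b, a != b -> P (dfwith f (i:=i) x a) (dfwith f (i:=i) x b).
Proof.
move=> Psym Pf Px a b.
case: dfwithP => [|a' ia]; case: dfwithP => [|b' ib] //; first by rewrite eqxx.
- by move=> _; exact: Px.
- by move=> _; apply: Psym; exact: Px.
- exact: Pf.
Qed.

Lemma sum_dfwith (I : finType) (T : Type) (f : I -> T) (F : T -> nat) i (x : T) :
  \sum_j F (dfwith f (i:=i) x j) + F (f i) = \sum_j F (f j) + F x.
Proof.
rewrite (bigD1 i) // [in RHS](bigD1 i) //= dfwith_in.
rewrite (eq_bigr (fun j => F (f j))) => [|j ji]; first lia.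
by rewrite dfwith_out // eq_sym.
Qed.

Section Neighbourhoods.

Variable V : finType.
Implicit Types (e : rel V) (S : {set V}).

Definition nbhd e S : {set V} := \bigcup_(s in S) [set u | e s u].

Lemma nbhdP e S u : reflect (exists2 s, s \in S & e s u) (u \in nbhd e S).
Proof.
apply: (iffP bigcupP) => [[s sS]|[s sS esu]]; first by rewrite inE; exists s.
by exists s; rewrite ?inE.
Qed.

Lemma card_nbhd e S d : (forall x, deg e x <= d) -> #|nbhd e S| <= #|S| * d.
Proof.
move=> degd; apply: leq_trans (leq_card_bigcup _ _) _.
by rewrite -sum_nat_const; apply: leq_sum => s _; exact: degd.
Qed.

Definition compl_graph e : rel V := fun x y => (x != y) && ~~ e x y.

Lemma deg_compl_graph e x : ~~ e x x -> (deg (compl_graph e) x + deg e x).+1 = #|V|.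
Proof.
move=> exx; rewrite /deg.
have -> : [set u | compl_graph e x u] = ~: (x |: [set u | e x u]).
  by apply/setP => u; rewrite !inE negb_or eq_sym.
by rewrite -(cardsC (x |: [set u | e x u])) cardsU1 inE exx; lia.
Qed.

Lemma mindeg_leq_deg e v : mindeg e <= deg e v.
Proof.
rewrite /mindeg; have : v \in index_enum V by rewrite mem_index_enum.
elim: (index_enum V) => [//|a r IH]; rewrite inE big_cons.
case/orP => [/eqP ->|vr]; first exact: geq_minl.
exact: leq_trans (geq_minr _ _) (IH vr).
Qed.

Lemma mindeg_lt_card e : (forall x, ~~ e x x) -> 0 < #|V| -> mindeg e < #|V|.
Proof.
move=> irr /card_gt0P [v _]; apply: leq_ltn_trans (mindeg_leq_deg e v) _.
by rewrite -(deg_compl_graph (irr v)) ltnS leq_addl.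
Qed.

Lemma edgeless_maxdeg0 e : maxdeg e = 0 -> forall x y, ~~ e x y.
Proof.
move=> e0 x y; apply/negP => exy.
have := @leq_bigmax V (deg e) x; rewrite -/(maxdeg e) e0 leqn0 cards_eq0.
by move/eqP/setP/(_ y); rewrite !inE exy.
Qed.

Definition clique e S := {in S &, forall x y, x != y -> e x y}.

Lemma cliqueS e (S T : {set V}) : T \subset S -> clique e S -> clique e T.
Proof. by move=> /subsetP TS cS x y /TS xS /TS yS; exact: cS. Qed.

Lemma clique_setU1 e S u :
  symmetric e -> clique e S -> {in S, forall y, e u y} -> clique e (u |: S).
Proof.
move=> eC cS uS x y; rewrite !in_setU1.
case/predU1P => [->|xS] /predU1P [->|yS]; rewrite ?eqxx // => xy.
- exact: uS.
- by rewrite eC; exact: uS.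
- exact: cS.
Qed.

End Neighbourhoods.

Section AlternatingBags.

Variables (V : finType) (e2 e3 : rel V).
Implicit Types (A B Y Z : {set V}) (u : V).

Lemma alt_bag_sym A B :
  symmetric e2 -> symmetric e3 -> alt_bag e2 e3 A B -> alt_bag e2 e3 B A.
Proof.
move=> e2C e3C [x2 [y2 [x3 [y3 [[h2 [a2 b2]] [h3 [a3 b3]] hd]]]]].
exists y2, x2, y3, x3; split; rewrite 1?e2C 1?e3C //.
by rewrite [[set y2; x2]]setUC [[set y3; x3]]setUC.
Qed.

Lemma alt_bagS A B (A' B' : {set V}) :
  A' \subset A -> B' \subset B -> alt_bag e2 e3 A' B' -> alt_bag e2 e3 A B.
Proof.
move=> /subsetP sA /subsetP sB [x2 [y2 [x3 [y3 [[h2 [a2 b2]] [h3 [a3 b3]] hd]]]]].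
by exists x2, y2, x3, y3; split=> //; split=> //; split; auto.
Qed.

(* A bag of u |: Y with Z that is not one of Y with Z uses u as an end of
   exactly one of its two edges, the other edge running from Y to Z. *)
Lemma not_alt_bag_setU1 Y Z u :
  ~ alt_bag e2 e3 Y Z ->
  {in Z, forall z, e2 u z -> {in Y & Z, forall y z', ~~ e3 y z'}} ->
  {in Z, forall z, e3 u z -> {in Y & Z, forall y z', ~~ e2 y z'}} ->
  ~ alt_bag e2 e3 (u |: Y) Z.
Proof.
move=> nbag u2 u3 [x2 [y2 [x3 [y3 [[h2 [a2 b2]] [h3 [a3 b3]] hd]]]]].
have x23 : x2 != x3.
  by apply: contraTneq hd => ->; apply/pred0Pn; exists x3; rewrite /= !inE !eqxx.
move: a2 a3; rewrite !in_setU1.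
case/predU1P => [ex2|a2] /predU1P [ex3|a3].
- by rewrite ex2 ex3 eqxx in x23.
- by subst x2; move: (u2 y2 b2 h2 x3 y3 a3 b3); rewrite h3.
- by subst x3; move: (u3 y3 b3 h3 x2 y2 a2 b2); rewrite h2.
- by apply: nbag; exists x2, y2, x3, y3.
Qed.

Lemma not_alt_bag_edgeless A B :
  (forall x y, ~~ e2 x y) \/ (forall x y, ~~ e3 x y) -> ~ alt_bag e2 e3 A B.
Proof.
move=> [e2F|e3F] [x2 [y2 [x3 [y3 [[h2 _] [h3 _] _]]]]].
- by move: (e2F x2 y2); rewrite h2.
- by move: (e3F x3 y3); rewrite h3.
Qed.

End AlternatingBags.

Section DisjointFamily.

Variables (V : finType) (k : nat) (A : 'I_k -> {set V}).
Hypothesis disjA : forall i j, i != j -> [disjoint A i & A j].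
Implicit Types (S : {set V}) (ea eb : rel V).

Definition parts_meeting (S : {set V}) : {set 'I_k} := [set i | ~~ [disjoint A i & S]].

Lemma parts_meetingP S i :
  reflect (exists2 x, x \in A i & x \in S) (i \in parts_meeting S).
Proof.
rewrite inE; apply: (iffP pred0Pn) => [[x /andP [xA xS]]|[x xA xS]].
  by exists x.
by exists x; rewrite /= xA.
Qed.

Lemma sum_card_setI_leq (P : pred 'I_k) S : \sum_(i | P i) #|A i :&: S| <= #|S|.
Proof.
rewrite -card_bigcup_disjoint => [|i j ij]; last first.
  by apply: disjointW (disjA ij); exact: subsetIl.
by apply: subset_leq_card; apply/bigcupsP => i _; exact: subsetIr.
Qed.

Lemma card_parts_meeting S : #|parts_meeting S| <= #|S|.
Proof.
apply: leq_trans (sum_card_setI_leq (mem (parts_meeting S)) S).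
rewrite -sum1_card; apply: leq_sum => i /parts_meetingP [x xA xS].
by rewrite card_gt0; apply/set0Pn; exists x; rewrite inE xA.
Qed.

Definition linked (ea eb : rel V) : rel V :=
  fun x y => [exists j, [exists z in A j, ea x z] && [exists z in A j, eb y z]].

Lemma linkedC ea eb x y : linked ea eb x y = linked eb ea y x.
Proof. by apply: eq_existsb => j; rewrite andbC. Qed.

Lemma deg_linked (l da db : nat) ea eb :
  symmetric eb -> (forall i, #|A i| <= l) ->
  (forall x, deg ea x <= da) -> (forall x, deg eb x <= db) ->
  forall x, deg (linked ea eb) x <= da * l * db.
Proof.
move=> ebC sizeA dega degb x.
set P := parts_meeting [set z | ea x z].
have sub : [set y | linked ea eb x y] \subset \bigcup_(j in P) nbhd eb (A j).
  apply/subsetP => y; rewrite inE => /existsP [j /andP [/exists_inP [z zA xz]]].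
  case/exists_inP => z' z'A yz'; apply/bigcupP; exists j.
    by apply/parts_meetingP; exists z; rewrite ?inE.
  by apply/nbhdP; exists z'; rewrite // ebC.
apply: leq_trans (subset_leq_card sub) _; apply: leq_trans (leq_card_bigcup _ _) _.
apply: (@leq_trans (\sum_(j in P) l * db)).
  apply: leq_sum => j _; apply: leq_trans (card_nbhd _ degb) _.
  by rewrite leq_mul2r sizeA orbT.
rewrite sum_nat_const -mulnA leq_mul2r; apply/orP; right.
by apply: leq_trans (card_parts_meeting _) (dega x).
Qed.

End DisjointFamily.

Definition partial_packing (V : finType) (e1 e2 e3 : rel V) (l k : nat)
    (A : 'I_k -> {set V}) :=
  [/\ forall i, clique e1 (A i) /\ #|A i| <= l,
      forall i j, i != j -> [disjoint A i & A j] &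
      forall i j, i != j -> ~ alt_bag e2 e3 (A i) (A j)].

Definition bagfree_Kl_packing (V : finType) (e1 e2 e3 : rel V) (l k : nat)
    (A : 'I_k -> {set V}) :=
  [/\ forall i, is_Kl_copy e1 l (A i),
      forall i j, i != j -> [disjoint A i & A j] &
      forall i j, i != j -> ~ alt_bag e2 e3 (A i) (A j)].

Definition packing_size (V : finType) (k : nat) (A : 'I_k -> {set V}) : nat :=
  \sum_i #|A i|.

Lemma partial_packing_dfwith (V : finType) (e1 e2 e3 : rel V) (l k : nat)
    (A : 'I_k -> {set V}) i (X : {set V}) :
  symmetric e2 -> symmetric e3 -> partial_packing e1 e2 e3 l A ->
  clique e1 X -> #|X| <= l ->
  (forall j, i != j -> [disjoint X & A j]) ->
  (forall j, i != j -> ~ alt_bag e2 e3 X (A j)) ->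
  partial_packing e1 e2 e3 l (dfwith A (i:=i) X).
Proof.
move=> e2C e3C [partsA disjA bagfreeA] cX sX disjX bagfreeX; split.
- by move=> j; case: dfwithP.
- apply: (pairwise_dfwith (P := fun Y Z : {set V} => [disjoint Y & Z])) => // Y Z.
  by rewrite disjoint_sym.
- apply: (pairwise_dfwith (P := fun Y Z => ~ alt_bag e2 e3 Y Z)) => // Y Z nbag.
  by move/(alt_bag_sym e2C e3C).
Qed.

Section Augmentation.

Variables (V : finType) (e1 e2 e3 : rel V) (l k t d2 d3 : nat).
Hypotheses (e1C : symmetric e1) (e2C : symmetric e2) (e3C : symmetric e3).
Hypotheses (e12 : edge_disjoint e1 e2) (e13 : edge_disjoint e1 e3).
Hypotheses (deg_compl1 : forall x, deg (compl_graph e1) x <= t)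
  (deg2 : forall x, deg e2 x <= d2) (deg3 : forall x, deg e3 x <= d3).
Hypothesis budget : 2 * l * t + 4 * l * l * (d2 * d3) + d2 + d3 < l * k.

Variable A : 'I_k -> {set V}.
Hypothesis packA : partial_packing e1 e2 e3 l A.

Let cliqueA i : clique e1 (A i). Proof. by case: packA => /(_ i) []. Qed.
Let sizeA i : #|A i| <= l. Proof. by case: packA => /(_ i) []. Qed.
Let disjA i j : i != j -> [disjoint A i & A j].
Proof. by case: packA => _ /(_ i j). Qed.
Let bagfreeA i j : i != j -> ~ alt_bag e2 e3 (A i) (A j).
Proof. by case: packA => _ _ /(_ i j). Qed.

(* [x] and [y] cannot share a part, or could close an alternating bag through
   a third part. *)
Definition conflict : rel V :=
  fun x y => [|| compl_graph e1 x y, linked A e2 e3 x y | linked A e3 e2 x y].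

Lemma conflictC : symmetric conflict.
Proof.
move=> x y; rewrite /conflict /compl_graph eq_sym e1C.
rewrite (linkedC A e2 e3 y) (linkedC A e3 e2 y).
by case: (linked A e3 e2 x y); rewrite ?orbT ?orbF.
Qed.

Lemma adj_of_conflict_free x y : ~~ conflict x y -> x != y -> e1 x y.
Proof.
by move=> /norP [nxy _] xy; apply: contraR nxy => exy; rewrite /compl_graph xy exy.
Qed.

Lemma deg_conflict x : deg conflict x <= t + 2 * (d2 * l * d3).
Proof.
rewrite /deg; have -> : [set y | conflict x y] = [set y | compl_graph e1 x y]
    :|: [set y | linked A e2 e3 x y] :|: [set y | linked A e3 e2 x y].
  by apply/setP => y; rewrite !inE /conflict orbA.
apply: leq_trans (leq_card_setU _ _) _.
apply: leq_trans (leq_add (leq_card_setU _ _) (leqnn _)) _.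
have := deg_compl1 x; have := deg_linked disjA e3C sizeA deg2 deg3 x.
have := deg_linked disjA e2C sizeA deg3 deg2 x; rewrite /deg; lia.
Qed.

Lemma not_alt_bag_setU1_conflict u Y j :
  ~ alt_bag e2 e3 Y (A j) -> {in Y, forall y, ~~ conflict u y} ->
  ~ alt_bag e2 e3 (u |: Y) (A j).
Proof.
move=> nbag uY.
have linked_via (ea eb : rel V) z z' y : z \in A j -> z' \in A j -> ea u z -> eb y z' ->
    linked A ea eb u y.
  by move=> zA z'A uz yz'; apply/existsP; exists j; apply/andP; split;
    apply/exists_inP; [exists z | exists z'].
apply: not_alt_bag_setU1 => // z zA uz y z' yY z'A; apply: contra (uY y yY) => yz'.
- by rewrite /conflict (linked_via _ _ _ _ _ zA z'A uz yz') orbT.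
- by rewrite /conflict (linked_via _ _ _ _ _ zA z'A uz yz') !orbT.
Qed.

Lemma exists_uncovered : packing_size A < k * l -> k * l <= #|V| ->
  exists v, forall i, v \notin A i.
Proof.
move=> notfull kl; have : ~~ ([set: V] \subset \bigcup_i A i).
  apply: contraTN notfull => /subset_leq_card; rewrite cardsT -leqNgt => cover.
  exact: leq_trans kl (leq_trans cover (leq_card_bigcup _ _)).
case/subsetPn => v _ vA; exists v => i; apply: contra vA => vi.
by apply/bigcupP; exists i.
Qed.

Lemma exists_deficient_part : packing_size A < k * l -> exists C, #|A C| < l.
Proof.
rewrite /packing_size.
case: (pickP [pred i | #|A i| < l]) => [C Cl _|full]; first by exists C.
have : \sum_(i < k) l <= \sum_i #|A i|.
  by apply: leq_sum => i _; move: (full i); rewrite /= ltnNge => /negbFE.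
by rewrite sum_nat_const card_ord leqNgt => /negbTE ->.
Qed.

Section FreshVertex.

Variable v : V.
Hypothesis v_uncovered : forall i, v \notin A i.

Definition bad_parts : {set 'I_k} := parts_meeting A (nbhd conflict [set v]).

Lemma card_bad_parts : #|bad_parts| <= t + 2 * (d2 * l * d3).
Proof.
apply: leq_trans (card_parts_meeting disjA _) _.
by apply: leq_trans (card_nbhd _ deg_conflict) _; rewrite cards1 mul1n.
Qed.

Lemma good_part_conflict_free i :
  i \notin bad_parts -> {in A i, forall y, ~~ conflict v y}.
Proof.
move=> iG y yA; apply: contra iG => vy; apply/parts_meetingP; exists y => //.
by apply/nbhdP; exists v; rewrite ?inE.
Qed.

Lemma clique_good_setU1 i : i \notin bad_parts -> clique e1 (v |: A i).
Proof.
move=> iG; apply: clique_setU1 => // y yA.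
apply: adj_of_conflict_free (good_part_conflict_free iG yA) _.
by apply: contraNneq (v_uncovered i) => ->.
Qed.

Lemma disjoint_setU1_part i j : i != j -> [disjoint v |: A i & A j].
Proof. by move=> ij; rewrite disjoint_setU1 v_uncovered disjA. Qed.

Lemma bagfree_good_setU1 i j :
  i \notin bad_parts -> i != j -> ~ alt_bag e2 e3 (v |: A i) (A j).
Proof.
move=> iG ij; apply: not_alt_bag_setU1_conflict; first exact: bagfreeA.
exact: good_part_conflict_free.
Qed.

Lemma augment_at_good_part i : i \notin bad_parts -> #|A i| < l ->
  exists A' : 'I_k -> {set V},
    partial_packing e1 e2 e3 l A' /\ packing_size A' = (packing_size A).+1.
Proof.
move=> iG il; exists (dfwith A (i:=i) (v |: A i)); split.
  apply: partial_packing_dfwith => //.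
  - exact: clique_good_setU1.
  - by rewrite cardsU1 v_uncovered.
  - exact: disjoint_setU1_part.
  - by move=> j; exact: bagfree_good_setU1.
have := sum_dfwith A (fun X => #|X|) i (v |: A i); rewrite /packing_size.
by rewrite cardsU1 v_uncovered add1n addnS -addSn => /addIn.
Qed.

(* Vertices that may not be moved into the part [C] to make room for [v]. *)
Definition swap_forbidden (C : 'I_k) : {set V} :=
  nbhd conflict (A C) :|: nbhd e2 [set v] :|: nbhd e3 [set v].

Lemma card_swap_forbidden C :
  #|swap_forbidden C| <= l * (t + 2 * (d2 * l * d3)) + d2 + d3.
Proof.
apply: leq_trans (leq_card_setU _ _) _.
apply: leq_trans (leq_add (leq_card_setU _ _) (leqnn _)) _.
have := card_nbhd (A C) deg_conflict; have := card_nbhd [set v] deg2.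
have := card_nbhd [set v] deg3.
have := leq_mul (sizeA C) (leqnn (t + 2 * (d2 * l * d3))); rewrite cards1 !mul1n; lia.
Qed.

(* At least [k - (t + 2 d2 l d3)] parts are good, all of them full, and
   together they have more vertices than can be forbidden. *)
Lemma exists_swap_vertex C : (forall i, i \notin bad_parts -> #|A i| = l) ->
  exists2 D, D \notin bad_parts & exists2 w, w \in A D & w \notin swap_forbidden C.
Proof.
move=> full.
case: (pickP [pred D | (D \notin bad_parts) && ~~ (A D \subset swap_forbidden C)]).
  by move=> D /andP [DG /subsetPn [w wD wF]]; exists D => //; exists w.
move=> allF; exfalso.
have := sum_card_setI_leq disjA (fun D => D \in ~: bad_parts) (swap_forbidden C).
rewrite (eq_bigr (fun=> l)) => [|D]; last first.
  rewrite inE => DG; move: (allF D); rewrite /= DG => /negbFE/setIidPl ->.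
  exact: full.
rewrite sum_nat_const; have := cardsC bad_parts; rewrite card_ord.
have := leq_mul (leqnn l) card_bad_parts; have := card_swap_forbidden C.
move: #|bad_parts| #|~: bad_parts| #|swap_forbidden C| => b g F.
nia.
Qed.

Section Swap.

Variables (C D : 'I_k) (w : V).
Hypotheses (C_deficient : #|A C| < l) (DC : D != C) (D_good : D \notin bad_parts).
Hypotheses (wD : w \in A D) (w_allowed : w \notin swap_forbidden C).

Let wC : w \notin A C. Proof. by rewrite (disjointFr (disjA DC) wD). Qed.
Let wv : w != v. Proof. by apply: contraNneq (v_uncovered D) => <-. Qed.

Let w_conflict_free : {in A C, forall c, ~~ conflict w c}.
Proof.
move=> c cC; rewrite conflictC; apply: contra w_allowed => cw.
by rewrite !inE; apply/orP; left; apply/orP; left; apply/nbhdP; exists c.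
Qed.

Let C' := w |: A C.
Let D' := v |: (A D :\ w).

Let D'_sub : D' \subset v |: A D.
Proof. by apply: setUS; exact: subD1set. Qed.

Let card_D' : #|D'| = #|A D|.
Proof.
by rewrite cardsU1 (cardsD1 w (A D)) wD !inE (negbTE (v_uncovered D)) andbF.
Qed.

Let wD' : w \notin D'. Proof. by rewrite !inE eqxx (negbTE wv). Qed.

Let w_isolated : {in D', forall z, ~~ e2 w z && ~~ e3 w z}.
Proof.
move=> z; rewrite !inE => /predU1P [->|/andP [zw zD]].
  have vN (e : rel V) : e v w -> w \in nbhd e [set v].
    by move=> vw; apply/nbhdP; exists v; rewrite ?inE.
  by rewrite e2C e3C; apply/andP; split; apply: contra w_allowed => /vN vw;
    rewrite !in_setU vw orbT.
have wz : e1 w z by apply: (cliqueA wD zD); rewrite eq_sym.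
by rewrite (e12 wz) (e13 wz).
Qed.

Lemma swap_packing_D : partial_packing e1 e2 e3 l (dfwith A (i:=D) D').
Proof.
apply: partial_packing_dfwith => //.
- exact: cliqueS D'_sub (clique_good_setU1 D_good).
- by rewrite card_D'.
- by move=> j Dj; apply: disjointWl D'_sub (disjoint_setU1_part Dj).
- by move=> j Dj /(alt_bagS D'_sub (subxx _)); exact: bagfree_good_setU1.
Qed.

Lemma swap_packing :
  partial_packing e1 e2 e3 l (dfwith (dfwith A (i:=D) D') (i:=C) C').
Proof.
apply: partial_packing_dfwith swap_packing_D _ _ _ _ => //.
- apply: clique_setU1 => // c cC; apply: adj_of_conflict_free (w_conflict_free cC) _.
  by apply: contraNneq wC => ->.
- by rewrite cardsU1 wC.
- move=> j; case: dfwithP => [_|j' Dj' Cj].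
    rewrite disjoint_setU1 wD' /=.
    by apply: disjointWr D'_sub _; rewrite disjoint_sym disjoint_setU1_part.
  by rewrite disjoint_setU1 (disjointFr (disjA Dj') wD) (disjA Cj).
- move=> j; case: dfwithP => [_|j' Dj' Cj].
    apply: not_alt_bag_setU1.
    + move/(alt_bag_sym e2C e3C)/(alt_bagS D'_sub (subxx _)).
      exact: bagfree_good_setU1.
    + by move=> z /w_isolated /andP [/negbTE ->].
    + by move=> z /w_isolated /andP [_ /negbTE ->].
  by apply: not_alt_bag_setU1_conflict; [exact: bagfreeA | exact: w_conflict_free].
Qed.

Lemma swap_size :
  packing_size (dfwith (dfwith A (i:=D) D') (i:=C) C') = (packing_size A).+1.
Proof.
rewrite /packing_size.
have := sum_dfwith A (fun X => #|X|) D D'.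
have := sum_dfwith (dfwith A (i:=D) D') (fun X => #|X|) C C'.
rewrite /= dfwith_out // /C' card_D' cardsU1 wC add1n addnS -addSn.
by move=> /addIn -> /addIn ->.
Qed.

End Swap.

Lemma augment_with_vertex : (exists C, #|A C| < l) ->
  exists A' : 'I_k -> {set V},
    partial_packing e1 e2 e3 l A' /\ packing_size A' = (packing_size A).+1.
Proof.
move=> [C Cl].
case: (pickP [pred i | (i \notin bad_parts) && (#|A i| < l)]) => [i /andP [iG il]|full].
  exact: augment_at_good_part iG il.
have full' i : i \notin bad_parts -> #|A i| = l.
  move=> iG; apply/eqP; rewrite eqn_leq sizeA leqNgt.
  by move: (full i); rewrite /= iG /= => ->.
have [D DG [w wD wF]] := exists_swap_vertex C full'.
have DC : D != C.
  by apply: contraNneq DG => ->; apply: contraLR Cl => /full' ->; rewrite ltnn.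
by eexists; split; [exact: swap_packing DC DG wD wF | exact: swap_size DC wD].
Qed.

End FreshVertex.

Lemma augment_partial_packing : packing_size A < k * l -> k * l <= #|V| ->
  exists A' : 'I_k -> {set V},
    partial_packing e1 e2 e3 l A' /\ packing_size A' = (packing_size A).+1.
Proof.
move=> notfull kl; have [v vA] := exists_uncovered notfull kl.
exact: augment_with_vertex vA (exists_deficient_part notfull).
Qed.

End Augmentation.

Lemma eq_bound_of_sum_ord (n c : nat) (F : 'I_n -> nat) :
  (forall i, F i <= c) -> \sum_i F i = n * c -> forall i, F i = c.
Proof.
move=> Fc sumF i; have [_] := leqif_sum (fun j (_ : true) => leqif_eq (Fc j)).
rewrite sumF big_const_ord iter_addn_0 mulnC eqxx.
by move/esym/forall_inP/(_ i isT)/eqP.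
Qed.

Lemma exists_bagfree_Kl_packing (V : finType) (e1 e2 e3 : rel V) (l k t d2 d3 : nat) :
  symmetric e1 -> symmetric e2 -> symmetric e3 ->
  edge_disjoint e1 e2 -> edge_disjoint e1 e3 ->
  (forall x, deg (compl_graph e1) x <= t) ->
  (forall x, deg e2 x <= d2) -> (forall x, deg e3 x <= d3) ->
  2 * l * t + 4 * l * l * (d2 * d3) + d2 + d3 < l * k -> k * l <= #|V| ->
  exists A : 'I_k -> {set V}, bagfree_Kl_packing e1 e2 e3 l A.
Proof.
move=> e1C e2C e3C e12 e13 degc deg2 deg3 budget kl.
have grow n : n <= k * l ->
    exists A : 'I_k -> {set V}, partial_packing e1 e2 e3 l A /\ packing_size A = n.
  elim: n => [_|n IH lt_n].
    exists (fun=> set0); split; last first.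
      by rewrite /packing_size big1 // => i _; rewrite cards0.
    split=> [i|i j _|i j _ [x2 [y2 [x3 [y3 [[_ [+ _]] _ _]]]]]]; rewrite ?inE //.
    - by split=> [x y|]; rewrite ?inE ?cards0.
    - by rewrite -setI_eq0 set0I.
  have [A [packA sizeA]] := IH (ltnW lt_n); rewrite -sizeA in lt_n *.
  exact: (augment_partial_packing e1C e2C e3C e12 e13 degc deg2 deg3 budget
    packA lt_n kl).
have [A [[partsA disjA bagfreeA] sizeA]] := grow _ (leqnn _).
exists A; split=> // i; split; last exact: (partsA i).1.
exact: eq_bound_of_sum_ord (fun j => (partsA j).2) sizeA i.
Qed.

Lemma exists_bagfree_Kl_packing_maxdeg (V : finType) (e1 e2 e3 : rel V) (l k t : nat) :
  symmetric e1 -> symmetric e2 -> symmetric e3 ->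
  edge_disjoint e1 e2 -> edge_disjoint e1 e3 ->
  (forall x, deg (compl_graph e1) x <= t) ->
  2 * l * t + 4 * l * l * (maxdeg e2 * maxdeg e3) + maxdeg e2 * maxdeg e3 + 1 < l * k ->
  k * l <= #|V| ->
  exists A : 'I_k -> {set V}, bagfree_Kl_packing e1 e2 e3 l A.
Proof.
move=> e1C e2C e3C e12 e13 degc budget kl.
have degmax (e : rel V) x : deg e x <= maxdeg e := @leq_bigmax V (deg e) x.
(* With [e] edgeless, packings without [(e, e)]-bags are just packings. *)
have edgeless_case (e : rel V) : symmetric e -> edge_disjoint e1 e -> maxdeg e = 0 ->
    (forall A B, ~ alt_bag e2 e3 A B) ->
    exists A : 'I_k -> {set V}, bagfree_Kl_packing e1 e2 e3 l A.
  move=> eC e1e e0 nobag.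
  have [|A [KA disjA _]] :=
    exists_bagfree_Kl_packing e1C eC eC e1e e1e degc (degmax e) (degmax e) _ kl.
    by rewrite e0; lia.
  by exists A; split.
have [e20|e2p] := posnP (maxdeg e2).
  apply: (edgeless_case e2 e2C e12 e20) => A B; apply: not_alt_bag_edgeless.
  by left; exact: edgeless_maxdeg0 e20.
have [e30|e3p] := posnP (maxdeg e3).
  apply: (edgeless_case e3 e3C e13 e30) => A B; apply: not_alt_bag_edgeless.
  by right; exact: edgeless_maxdeg0 e30.
have : maxdeg e2 + maxdeg e3 <= maxdeg e2 * maxdeg e3 + 1 by nia.
move=> ?; apply: (exists_bagfree_Kl_packing e1C e2C e3C e12 e13 degc
  (degmax e2) (degmax e3) _ kl); lia.
Qed.

Lemma nat_of_mindeg_bound (R : numFieldType) (m l d : nat) : 0 < l ->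
  ((m%:R : R) * ((3 * l)%:R - 1) / (3 * l)%:R <= d%:R)%R ->
  m * (3 * l - 1) <= d * (3 * l).
Proof.
move=> l0; have l3 : 0 < 3 * l by rewrite muln_gt0.
have -> : ((3 * l)%:R - 1 = (3 * l - 1)%:R :> R)%R by rewrite natrB.
by rewrite ler_pdivrMr ?ltr0n // -!natrM ler_nat.
Qed.

Lemma nat_of_maxdeg_bound (R : numFieldType) (m l p : nat) : 0 < l ->
  (p%:R <= ((m%:R : R) - 3) / (15 * l ^ 2)%:R)%R -> p * (15 * l ^ 2) + 3 <= m.
Proof.
move=> l0; have l15 : 0 < 15 * l ^ 2 by rewrite muln_gt0 expn_gt0 l0.
by rewrite ler_pdivlMr ?ltr0n // lerBrDr -natrM -(natrD _ _ 3) ler_nat.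
Qed.

Lemma augmentation_budget (m l dmin p : nat) :
  2 <= l -> dmin < m -> m * (3 * l - 1) <= dmin * (3 * l) ->
  p * (15 * l ^ 2) + 3 <= m ->
  2 * l * (m.-1 - dmin) + 4 * l * l * p + p + 1 < l * (m %/ l).
Proof.
move=> l2 dm hd hp.
have hk : m < l * (m %/ l) + l.
  by rewrite mulnC {1}(divn_eq m l) ltn_add2l ltn_mod (leq_trans _ l2).
have F1 : 3 * (l * (m.-1 - dmin)) + 3 * l <= m by nia.
have F4 : 4 * p <= l * l * p.
  by rewrite leq_mul2r; apply/orP; right; exact: (@leq_mul 2 2 l l l2 l2).
rewrite -mulnn in hp; lia.
Qed.

Theorem theorem3p1 (V : finType) (e1 e2 e3 : rel V) (l : nat) :
  simple_graph e1 -> simple_graph e2 -> simple_graph e3 ->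
  edge_disjoint e1 e2 -> edge_disjoint e1 e3 ->
  (2 <= l)%N ->
  ((#|V|%:R : rat) * ((3 * l)%:R - 1) / (3 * l)%:R <= (mindeg e1)%:R)%R ->
  ((maxdeg e2 * maxdeg e3)%:R <= ((#|V|%:R : rat) - 3) / (15 * l ^ 2)%:R)%R ->
  exists A : 'I_(#|V| %/ l) -> {set V},
    [/\ forall i, is_Kl_copy e1 l (A i),
        forall i j, i != j -> [disjoint A i & A j] &
        forall i j, i != j -> ~ alt_bag e2 e3 (A i) (A j)].
Proof.
move=> [e1C e1irr] [e2C _] [e3C _] e12 e13 l2 mindegH maxdegH.
have l0 : 0 < l := ltnW l2.
have hdmin := nat_of_mindeg_bound l0 mindegH.
have hp := nat_of_maxdeg_bound l0 maxdegH.
have dmin_lt : mindeg e1 < #|V| by apply: mindeg_lt_card e1irr _; lia.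
apply: (exists_bagfree_Kl_packing_maxdeg (t := #|V|.-1 - mindeg e1)) => //.
- by move=> x; have := deg_compl_graph (e1irr x); have := mindeg_leq_deg e1 x; lia.
- exact: augmentation_budget.
- exact: leq_divM.
Qed.
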